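(* Let $G$ be a Polish group, $X$ a Polish space with a continuous $G$-action, and $F\subseteq E^X_G$ a Borel equivalence relation on $X$ such that each $E^X_G$-class contains at most countably many $F$-classes. Then $E^X_G$ is a Borel subset of $X\times X$.
   Context: $E^X_G=\{(x,y):\exists g\in G\ g\cdot x=y\}$ is the orbit equivalence relation. *)

From Stdlib Require Import Reals.
Open Scope R_scope.

(* A topology on X is given by its predicate of open sets. *)
Definition topology (X : Type) := (X -> Prop) -> Prop.

Definition is_metric {X : Type} (d : X -> X -> R) : Prop :=
  (forall x y, 0 <= d x y) /\
  (forall x y, d x y = 0 <-> x = y) /\
  (forall x y, d x y = d y x) /\
  (forall x y z, d x z <= d x y + d y z).

Definition metric_open {X : Type} (d : X -> X -> R) (U : X -> Prop) : Prop :=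
  forall x, U x -> exists eps, 0 < eps /\ forall y, d x y < eps -> U y.

Definition metric_complete {X : Type} (d : X -> X -> R) : Prop :=
  forall u : nat -> X,
    (forall eps, 0 < eps -> exists N, forall m n, (N <= m)%nat -> (N <= n)%nat ->
        d (u m) (u n) < eps) ->
    exists l, forall eps, 0 < eps -> exists N, forall n, (N <= n)%nat -> d (u n) l < eps.

(* separable: there is a countable dense subset (enumerated by a partial sequence,
   so that the empty space is allowed) *)
Definition metric_separable {X : Type} (d : X -> X -> R) : Prop :=
  exists s : nat -> option X,
    forall x eps, 0 < eps -> exists n y, s n = Some y /\ d x y < eps.

Definition polish {X : Type} (t : topology X) : Prop :=
  exists d : X -> X -> R,
    is_metric d /\ metric_complete d /\ metric_separable d /\
    (forall U, t U <-> metric_open d U).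

Definition prod_topology {X Y : Type} (tX : topology X) (tY : topology Y)
  : topology (X * Y) :=
  fun W => forall p, W p -> exists A B, tX A /\ tY B /\ A (fst p) /\ B (snd p) /\
      (forall x y, A x -> B y -> W (x, y)).

Definition continuous {X Y : Type} (tX : topology X) (tY : topology Y) (f : X -> Y) : Prop :=
  forall V, tY V -> tX (fun x => V (f x)).

Inductive borel {X : Type} (t : topology X) : (X -> Prop) -> Prop :=
| borel_open : forall U, t U -> borel t U
| borel_compl : forall A, borel t A -> borel t (fun x => ~ A x)
| borel_cunion : forall A : nat -> X -> Prop, (forall n, borel t (A n)) ->
    borel t (fun x => exists n, A n x)
| borel_ext : forall A B, borel t A -> (forall x, A x <-> B x) -> borel t B.

Definition is_group {G : Type} (mul : G -> G -> G) (inv : G -> G) (e : G) : Prop :=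
  (forall a b c, mul a (mul b c) = mul (mul a b) c) /\
  (forall a, mul e a = a /\ mul a e = a) /\
  (forall a, mul (inv a) a = e /\ mul a (inv a) = e).

Definition polish_group {G : Type} (tG : topology G)
  (mul : G -> G -> G) (inv : G -> G) (e : G) : Prop :=
  is_group mul inv e /\ polish tG /\
  continuous (prod_topology tG tG) tG (fun p => mul (fst p) (snd p)) /\
  continuous tG tG inv.

Definition continuous_action {G X : Type} (tG : topology G) (tX : topology X)
  (mul : G -> G -> G) (e : G) (act : G -> X -> X) : Prop :=
  (forall x, act e x = x) /\
  (forall g h x, act (mul g h) x = act g (act h x)) /\
  continuous (prod_topology tG tX) tX (fun p => act (fst p) (snd p)).

Definition orbit_eqrel {G X : Type} (act : G -> X -> X) (x y : X) : Prop :=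
  exists g, act g x = y.

Definition equivalence_rel {X : Type} (F : X -> X -> Prop) : Prop :=
  (forall x, F x x) /\ (forall x y, F x y -> F y x) /\
  (forall x y z, F x y -> F y z -> F x z).

Definition borel_rel {X : Type} (tX : topology X) (F : X -> X -> Prop) : Prop :=
  borel (prod_topology tX tX) (fun p => F (fst p) (snd p)).

(** Write [∃* g, P g] for "the set of [g] with [P g] is not meager in [G]".
    If [x E y], the orbit of [x] meets only countably many [F]-classes, so by
    Baire's theorem some class [C] satisfies [∃* g, g·x ∈ C]; translating on the
    right by the element carrying [x] to [y] also gives [∃* h, h·y ∈ C], hence
    [x E y <-> ∃* h, ∃* g, F (g·x) (h·y)], the converse being trivial.
    The right-hand side is Borel by a Kuratowski–Ulam type lemma: for Borel
    [B ⊆ Y × G] and open [U ⊆ G], the set [{y | ∃* g ∈ U, B (y, g)}] is Borel.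
    This is proved by induction on [B]; the complement step uses that every
    section of [B] has the Baire property, so that [∃* g ∈ U, ~ B (y, g)] holds
    iff [B (y, ·)] is meager in some basic ball inside [U]. *)

From Stdlib Require Import Reals Lra Lia Classical ClassicalEpsilon Cantor.
Open Scope R_scope.

Section MetricCategory.

Context {G : Type} (d : G -> G -> R).
Hypothesis d_metric : is_metric d.

Definition nowhere_dense (N : G -> Prop) : Prop :=
  forall U, metric_open d U -> (exists x, U x) ->
    exists V, metric_open d V /\ (exists x, V x) /\
      (forall z, V z -> U z) /\ (forall z, V z -> ~ N z).

Definition meager (M : G -> Prop) : Prop :=
  exists N : nat -> G -> Prop,
    (forall n, nowhere_dense (N n)) /\ forall z, M z -> exists n, N n z.

Definition closure (O : G -> Prop) (z : G) : Prop :=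
  forall eps, 0 < eps -> exists w, O w /\ d z w < eps.

Definition baire_property (A : G -> Prop) : Prop :=
  exists O, metric_open d O /\ meager (fun z => (A z /\ ~ O z) \/ (O z /\ ~ A z)).

Definition dense_seq (s : nat -> option G) : Prop :=
  forall x eps, 0 < eps -> exists n y, s n = Some y /\ d x y < eps.

Lemma metric_refl x : d x x = 0.
Proof. destruct d_metric as (_ & Heq & _). apply Heq. reflexivity. Qed.

Lemma ball_open c r : metric_open d (fun z => d c z < r).
Proof.
  destruct d_metric as (_ & _ & _ & Htri).
  intros x Hx. exists (r - d c x). split; [lra|].
  intros y Hy. specialize (Htri c x y). lra.
Qed.

Lemma metric_open_inter U V :
  metric_open d U -> metric_open d V -> metric_open d (fun z => U z /\ V z).
Proof.
  intros HU HV z [Hu Hv].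
  destruct (HU z Hu) as (e1 & He1 & H1). destruct (HV z Hv) as (e2 & He2 & H2).
  exists (Rmin e1 e2). split; [apply Rmin_glb_lt; auto|].
  intros y Hy. pose proof (Rmin_l e1 e2). pose proof (Rmin_r e1 e2).
  split; [apply H1 | apply H2]; lra.
Qed.

Lemma subset_closure (O : G -> Prop) z : O z -> closure O z.
Proof. intros Hz eps Heps. exists z. rewrite metric_refl. auto. Qed.

Lemma closure_complement_open O : metric_open d (fun z => ~ closure O z).
Proof.
  destruct d_metric as (_ & _ & _ & Htri).
  intros z Hz. apply not_all_ex_not in Hz as [eps Heps].
  apply imply_to_and in Heps as [Heps Hfar].
  exists (eps / 2). split; [lra|]. intros y Hy Hcl.
  destruct (Hcl (eps / 2)) as (w & Hw & Hyw); [lra|].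
  apply Hfar. exists w. split; auto. specialize (Htri z y w). lra.
Qed.

Lemma nowhere_dense_boundary O :
  metric_open d O -> nowhere_dense (fun z => closure O z /\ ~ O z).
Proof.
  intros HO U HU [x Hx].
  destruct (classic (exists w, U w /\ O w)) as [[w Hw] | Hmiss].
  - exists (fun z => U z /\ O z). split; [apply metric_open_inter; auto|].
    split; [exists w; auto|]. split; [tauto|]. tauto.
  - exists U. split; auto. split; [exists x; auto|]. split; auto.
    intros z Hz [Hcl _]. destruct (HU z Hz) as (eps & Heps & Hball).
    destruct (Hcl eps Heps) as (w & Hw & Hzw). apply Hmiss. exists w. auto.
Qed.

Lemma meager_sub (A B : G -> Prop) : meager A -> (forall z, B z -> A z) -> meager B.
Proof. intros (N & HN & Hcover) HBA. exists N. split; auto. Qed.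

Lemma meager_nowhere_dense N : nowhere_dense N -> meager N.
Proof. intro HN. exists (fun _ => N). split; auto. intros z Hz. exists O. exact Hz. Qed.

Lemma meager_empty : meager (fun _ => False).
Proof.
  apply meager_nowhere_dense. intros U HU Hne. exists U. repeat split; auto.
Qed.

Lemma not_meager_inhabited A : ~ meager A -> exists z, A z.
Proof.
  intro HA. apply NNPP. intro Hno. apply HA.
  apply (meager_sub _ _ meager_empty). intros z Hz. apply Hno. exists z. exact Hz.
Qed.

Lemma meager_cunion (A : nat -> G -> Prop) :
  (forall n, meager (A n)) -> meager (fun z => exists n, A n z).
Proof.
  intro HA. destruct (choice _ HA) as [N HN].
  exists (fun j => N (fst (of_nat j)) (snd (of_nat j))). split.
  - intro j. apply (proj1 (HN _)).
  - intros z [n Hz]. destruct (proj2 (HN n) z Hz) as [k Hk].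
    exists (to_nat (n, k)). rewrite cancel_of_to. exact Hk.
Qed.

Lemma meager_union (A B : G -> Prop) :
  meager A -> meager B -> meager (fun z => A z \/ B z).
Proof.
  intros HA HB.
  apply (meager_sub (fun z => exists n, match n with O => A z | _ => B z end)).
  - apply meager_cunion. intros [|n]; assumption.
  - intros z [Hz | Hz]; [exists O | exists 1%nat]; exact Hz.
Qed.

Lemma baire_step (N : G -> Prop) x r eps :
  nowhere_dense N -> 0 < r -> 0 < eps ->
  exists x' r', 0 < r' /\ r' <= eps /\
    forall z, d x' z <= r' -> d x z < r /\ ~ N z.
Proof.
  intros HN Hr Heps.
  destruct (HN (fun z => d x z < r) (ball_open x r)) as (V & HV & [y Hy] & HVU & HVN).
  { exists x. rewrite metric_refl. exact Hr. }
  destruct (HV y Hy) as (delta & Hdelta & Hball).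
  exists y, (Rmin (delta / 2) eps).
  pose proof (Rmin_l (delta / 2) eps). pose proof (Rmin_r (delta / 2) eps).
  split; [apply Rmin_glb_lt; lra|]. split; [lra|].
  intros z Hz. assert (Hyz : d y z < delta) by lra. auto.
Qed.

Lemma nested_closed_balls_limit (c : nat -> G) (r : nat -> R) :
  metric_complete d ->
  (forall n z, d (c (S n)) z <= r (S n) -> d (c n) z <= r n) ->
  (forall n, 0 <= r n) ->
  (forall eps, 0 < eps -> exists n, r n < eps) ->
  exists l, forall n, d (c n) l <= r n.
Proof.
  intros Hcomplete Hnest Hr0 Hsmall.
  destruct d_metric as (_ & _ & Hsym & Htri).
  assert (Hin : forall k j, d (c k) (c (k + j)%nat) <= r k).
  { intros k j.
    assert (Hball : forall z, d (c (k + j)%nat) z <= r (k + j)%nat -> d (c k) z <= r k).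
    { induction j as [|j IH]; intros z Hz.
      - rewrite Nat.add_0_r in Hz. exact Hz.
      - rewrite Nat.add_succ_r in Hz. apply IH, Hnest, Hz. }
    apply Hball. rewrite metric_refl. apply Hr0. }
  destruct (Hcomplete c) as [l Hl].
  { intros eps Heps. destruct (Hsmall (eps / 2)) as [k Hk]; [lra|].
    exists k. intros m n Hm Hn.
    pose proof (Hin k (m - k)%nat) as Hkm. pose proof (Hin k (n - k)%nat) as Hkn.
    replace (k + (m - k))%nat with m in Hkm by lia.
    replace (k + (n - k))%nat with n in Hkn by lia.
    pose proof (Htri (c m) (c k) (c n)). pose proof (Hsym (c m) (c k)). lra. }
  exists l. intro k. apply Rnot_lt_le. intro Hfar.
  destruct (Hl (d (c k) l - r k)) as [N HN]; [lra|].
  pose proof (Hin k N). pose proof (HN (k + N)%nat ltac:(lia)).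
  pose proof (Htri (c k) (c (k + N)%nat) l). lra.
Qed.

Theorem baire_ball x r : metric_complete d -> 0 < r -> ~ meager (fun z => d x z < r).
Proof.
  intros Hcomplete Hr (N & HN & Hcover).
  pose (shrinks k (p q : G * R) := 0 < snd p ->
    0 < snd q /\ snd q <= / INR (S k) /\
    forall z, d (fst q) z <= snd q -> d (fst p) z < snd p /\ ~ N k z).
  assert (Hstep : forall kp : nat * (G * R), exists q, shrinks (fst kp) (snd kp) q).
  { intros [k [y t]]. destruct (Rlt_le_dec 0 t) as [Ht | Ht].
    - destruct (baire_step (N k) y t (/ INR (S k)) (HN k) Ht) as (y' & t' & H).
      { apply Rinv_0_lt_compat, lt_0_INR. lia. }
      exists (y', t'). intros _. exact H.
    - exists (y, t). intro Hpos. simpl in Hpos. lra. }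
  destruct (choice _ Hstep) as [next Hnext].
  pose (u := fix u n := match n with O => (x, r) | S k => next (k, u k) end).
  assert (Hu : forall k, 0 < snd (u k) /\ shrinks k (u k) (u (S k))).
  { induction k as [|k [Hpos Hsh]].
    - split; [exact Hr | apply (Hnext (O, (x, r)))].
    - split; [apply Hsh, Hpos | apply (Hnext (S k, u (S k)))]. }
  destruct (nested_closed_balls_limit (fun n => fst (u (S n))) (fun n => snd (u (S n))))
    as [l Hl]; auto.
  - intros n z Hz. left. apply (proj2 (proj2 (proj2 (Hu (S n)) (proj1 (Hu (S n)))))), Hz.
  - intro n. left. apply (proj1 (proj2 (Hu n) (proj1 (Hu n)))).
  - intros eps Heps. destruct (archimed_cor1 eps Heps) as [[|n] [Hn Hn0]]; [lia|].
    exists n. pose proof (proj1 (proj2 (proj2 (Hu n) (proj1 (Hu n))))). lra.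
  - destruct (proj2 (proj2 (proj2 (Hu O) Hr)) l (Hl O)) as [Hlx _].
    destruct (Hcover l Hlx) as [n Hn].
    exact (proj2 (proj2 (proj2 (proj2 (Hu n) (proj1 (Hu n)))) l (Hl n)) Hn).
Qed.

Lemma open_not_meager O g :
  metric_complete d -> metric_open d O -> O g -> ~ meager O.
Proof.
  intros Hcomplete HO Hg HM. destruct (HO g Hg) as (eps & Heps & Hball).
  apply (baire_ball g eps Hcomplete Heps). apply (meager_sub O); auto.
Qed.

Lemma baire_property_open A : metric_open d A -> baire_property A.
Proof.
  intro HA. exists A. split; auto.
  apply (meager_sub _ _ meager_empty). tauto.
Qed.

Lemma baire_property_ext A B :
  baire_property A -> (forall z, A z <-> B z) -> baire_property B.
Proof.
  intros (O & HO & HM) HAB. exists O. split; auto.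
  apply (meager_sub _ _ HM). intro z. rewrite <- HAB. tauto.
Qed.

Lemma baire_property_compl A : baire_property A -> baire_property (fun z => ~ A z).
Proof.
  intros (O & HO & HM). exists (fun z => ~ closure O z).
  split; [apply closure_complement_open|].
  apply (meager_sub (fun z => ((A z /\ ~ O z) \/ (O z /\ ~ A z)) \/ (closure O z /\ ~ O z))).
  - apply meager_union; auto. apply meager_nowhere_dense, nowhere_dense_boundary, HO.
  - intros z Hz. pose proof (subset_closure O z). destruct (classic (O z)); tauto.
Qed.

Lemma baire_property_cunion (A : nat -> G -> Prop) :
  (forall n, baire_property (A n)) -> baire_property (fun z => exists n, A n z).
Proof.
  intro HA. destruct (choice _ HA) as [O HO].
  exists (fun z => exists n, O n z). split.
  - intros z [n Hz]. destruct (proj1 (HO n) z Hz) as (eps & Heps & Hball).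
    exists eps. split; auto. intros y Hy. exists n. auto.
  - apply (meager_sub (fun z => exists n, (A n z /\ ~ O n z) \/ (O n z /\ ~ A n z))).
    + apply meager_cunion. intro n. apply (proj2 (HO n)).
    + intros z [[[n Hn] Hz] | [[n Hn] Hz]]; exists n;
        [left | right]; split; auto; intro; apply Hz; exists n; auto.
Qed.

Lemma basic_ball_inside (s : nat -> option G) V z :
  dense_seq s -> metric_open d V -> V z ->
  exists n m c, s n = Some c /\ d c z < / INR (S m) /\
    forall w, d c w < / INR (S m) -> V w.
Proof.
  destruct d_metric as (_ & _ & Hsym & Htri).
  intros Hs HV Hz. destruct (HV z Hz) as (eps & Heps & Hball).
  destruct (archimed_cor1 (eps / 2)) as [[|m] [Hm Hm0]]; [lra | lia |].
  assert (Hpos : 0 < / INR (S m)) by (apply Rinv_0_lt_compat, lt_0_INR; lia).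
  destruct (Hs z (/ INR (S m)) Hpos) as (n & c & Hsn & Hzc).
  exists n, m, c. rewrite Hsym. split; auto. split; auto.
  intros w Hw. apply Hball. specialize (Htri z c w). lra.
Qed.

(* [O] approximates [A] up to a meager set, so [~ A] is non-meager in [U] iff [U]
   leaves the closure of [O], i.e. iff some basic ball inside [U] misses [O]. *)
Lemma not_meager_compl_iff (s : nat -> option G) A U :
  metric_complete d -> dense_seq s -> baire_property A -> metric_open d U ->
  (~ meager (fun z => ~ A z /\ U z) <->
   exists n m c, s n = Some c /\ (forall w, d c w < / INR (S m) -> U w) /\
     meager (fun w => A w /\ d c w < / INR (S m))).
Proof.
  intros Hcomplete Hs (O & HO & HM) HU. split.
  - intro Hnm. apply NNPP. intro Hno. apply Hnm.
    assert (Hcl : forall z, U z -> closure O z).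
    { intros z Hz. apply NNPP. intro Hncl.
      apply not_all_ex_not in Hncl as [eps Heps].
      apply imply_to_and in Heps as [Heps Hfar].
      destruct (basic_ball_inside s (fun w => U w /\ d z w < eps) z Hs)
        as (n & m & c & Hsn & _ & Hball).
      { apply metric_open_inter; [exact HU | apply ball_open]. }
      { split; [exact Hz | rewrite metric_refl; exact Heps]. }
      apply Hno. exists n, m, c. split; [exact Hsn|]. split; [apply Hball|].
      apply (meager_sub _ _ HM). intros w [Hw Hcw]. left. split; [exact Hw|].
      intro HOw. apply Hfar. exists w. split; [exact HOw | apply Hball, Hcw]. }
    apply (meager_sub (fun z => ((A z /\ ~ O z) \/ (O z /\ ~ A z)) \/ (closure O z /\ ~ O z))).
    + apply meager_union; auto. apply meager_nowhere_dense, nowhere_dense_boundary, HO.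
    + intros z [Hz1 Hz2]. pose proof (Hcl z Hz2). destruct (classic (O z)); tauto.
  - intros (n & m & c & _ & Hsub & Hmg) Hmg'.
    apply (baire_ball c (/ INR (S m)) Hcomplete).
    { apply Rinv_0_lt_compat, lt_0_INR. lia. }
    apply (meager_sub _ _ (meager_union _ _ Hmg Hmg')).
    intros w Hw. destruct (classic (A w)); auto.
Qed.

Lemma meager_homeomorphism (phi psi : G -> G) M :
  (forall z, phi (psi z) = z) -> (forall z, psi (phi z) = z) ->
  (forall U, metric_open d U -> metric_open d (fun z => U (phi z))) ->
  (forall U, metric_open d U -> metric_open d (fun z => U (psi z))) ->
  meager M -> meager (fun z => M (phi z)).
Proof.
  intros Hphipsi Hpsiphi Hphi Hpsi (N & HN & Hcover).
  exists (fun n z => N n (phi z)). split; [|intros z Hz; apply Hcover, Hz].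
  intros n U HU [x Hx].
  destruct (HN n (fun z => U (psi z)) (Hpsi U HU)) as (V & HV & [v Hv] & HVU & HVN).
  { exists (phi x). rewrite Hpsiphi. exact Hx. }
  exists (fun w => V (phi w)). split; [apply Hphi, HV|]. split.
  - exists (psi v). rewrite Hphipsi. exact Hv.
  - split; [|intros z Hz; apply HVN, Hz].
    intros z Hz. rewrite <- (Hpsiphi z). apply HVU, Hz.
Qed.

End MetricCategory.

Definition local_topology {Y : Type} (tY : topology Y) : Prop :=
  forall W, (forall y, W y -> exists A, tY A /\ A y /\ forall a, A a -> W a) -> tY W.

Lemma prod_topology_local {A B : Type} (tA : topology A) (tB : topology B) :
  local_topology (prod_topology tA tB).
Proof.
  intros W HW p Hp. destruct (HW p Hp) as (O & HO & Hpo & HOW).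
  destruct (HO p Hpo) as (U & V & HU & HV & Hu & Hv & Hr).
  exists U, V. repeat split; auto.
Qed.

Lemma prod_topology_rect {A B : Type} (tA : topology A) (tB : topology B) U V :
  tA U -> tB V -> prod_topology tA tB (fun p => U (fst p) /\ V (snd p)).
Proof. intros HU HV p [Hu Hv]. exists U, V. repeat split; auto. Qed.

Lemma borel_empty {Y : Type} (t : topology Y) S : borel t S -> borel t (fun _ => False).
Proof.
  intro HS.
  apply (borel_ext t (fun y => ~ exists n, match n with O => S y | _ => ~ S y end)).
  - apply borel_compl, borel_cunion. intros [|n]; [exact HS | apply borel_compl, HS].
  - intro y. split; [|tauto]. intro Hno. apply Hno.
    destruct (classic (S y)); [exists O | exists 1%nat]; assumption.
Qed.

Lemma borel_preimage {A B : Type} (tA : topology A) (tB : topology B) (f : A -> B) S :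
  continuous tA tB f -> borel tB S -> borel tA (fun x => S (f x)).
Proof.
  intros Hf HS. induction HS as [U HU | S HS IH | S HS IH | S S' HS IH Hext].
  - apply borel_open, Hf, HU.
  - apply borel_compl, IH.
  - apply (borel_cunion tA (fun n x => S n (f x))), IH.
  - apply (borel_ext tA (fun x => S (f x))); auto.
Qed.

Section CategoryQuantifier.

Context {Y G : Type} (tY : topology Y) (tG : topology G) (d : G -> G -> R)
  (s : nat -> option G).
Hypotheses (tY_local : local_topology tY) (tG_metric : forall U, tG U <-> metric_open d U)
  (d_metric : is_metric d) (d_complete : metric_complete d) (s_dense : dense_seq d s).

Definition category_measurable (B : Y * G -> Prop) : Prop :=
  (forall y, baire_property d (fun g => B (y, g))) /\
  forall U, metric_open d U -> borel tY (fun y => ~ meager d (fun g => B (y, g) /\ U g)).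

Lemma category_measurable_open W : prod_topology tY tG W -> category_measurable W.
Proof.
  intro HW.
  assert (Hsec : forall y, metric_open d (fun g => W (y, g))).
  { intros y g Hg. destruct (HW (y, g) Hg) as (A & V & _ & HV & Ha & Hv & Hr).
    destruct (proj1 (tG_metric V) HV g Hv) as (eps & Heps & Hball).
    exists eps. split; [exact Heps|]. intros w Hw. apply (Hr y w Ha), Hball, Hw. }
  split; [intro y; apply baire_property_open, Hsec|].
  intros U HU. apply (borel_ext tY (fun y => exists g, W (y, g) /\ U g)).
  - apply borel_open, tY_local. intros y [g [Hg Hu]].
    destruct (HW (y, g) Hg) as (A & V & HA & HV & Ha & Hv & Hr).
    exists A. split; [exact HA|]. split; [exact Ha|].
    intros a Ha'. exists g. split; [apply (Hr a g Ha' Hv) | exact Hu].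
  - intro y. split.
    + intros [g Hg]. apply (open_not_meager d d_metric _ g d_complete); [|exact Hg].
      apply metric_open_inter; auto.
    + apply not_meager_inhabited.
Qed.

Lemma category_measurable_compl A :
  category_measurable A -> category_measurable (fun p => ~ A p).
Proof.
  intros [Hbp Hborel]. split; [intro y; apply (baire_property_compl d d_metric), Hbp|].
  intros U HU.
  pose (Q n m y := exists c, s n = Some c /\ (forall w, d c w < / INR (S m) -> U w) /\
    meager d (fun w => A (y, w) /\ d c w < / INR (S m))).
  apply (borel_ext tY (fun y => exists n m, Q n m y)).
  - apply borel_cunion. intro n. apply borel_cunion. intro m.
    destruct (classic (exists c, s n = Some c /\ (forall w, d c w < / INR (S m) -> U w)))
      as [(c & Hsn & Hsub) | Hno].
    + apply (borel_ext tY (fun y => ~ ~ meager d (fun w => A (y, w) /\ d c w < / INR (S m)))).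
      * apply borel_compl, Hborel, ball_open, d_metric.
      * intro y. split.
        -- intro H. exists c. split; [exact Hsn|]. split; [exact Hsub | apply NNPP, H].
        -- intros (c' & Hsn' & _ & H). rewrite Hsn in Hsn'. injection Hsn' as <-. tauto.
    + apply (borel_ext tY (fun _ => False)); [apply (borel_empty _ _ (Hborel U HU))|].
      intro y. split; [tauto|]. intros (c & Hsn & Hsub & _). apply Hno. exists c. auto.
  - intro y. symmetry. apply (not_meager_compl_iff d d_metric s); auto.
Qed.

Lemma category_measurable_cunion (A : nat -> Y * G -> Prop) :
  (forall n, category_measurable (A n)) ->
  category_measurable (fun p => exists n, A n p).
Proof.
  intro HA. split.
  - intro y. apply (baire_property_cunion d (fun n g => A n (y, g))).
    intro n. apply (proj1 (HA n)).
  - intros U HU.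
    apply (borel_ext tY (fun y => exists n, ~ meager d (fun g => A n (y, g) /\ U g))).
    + apply borel_cunion. intro n. apply (proj2 (HA n)), HU.
    + intro y. split.
      * intros [n Hn] HM. apply Hn. apply (meager_sub d _ _ HM).
        intros g [Hg Hu]. split; [exists n |]; assumption.
      * intro Hnm. apply NNPP. intro Hno. apply Hnm.
        apply (meager_sub d (fun g => exists n, A n (y, g) /\ U g)).
        -- apply meager_cunion. intro n. apply NNPP. intro H. apply Hno. exists n. exact H.
        -- intros g [[n Hg] Hu]. exists n. auto.
Qed.

Lemma category_measurable_ext A B :
  category_measurable A -> (forall p, A p <-> B p) -> category_measurable B.
Proof.
  intros [Hbp Hborel] HAB. split.
  - intro y. apply (baire_property_ext d (fun g => A (y, g))); auto.
  - intros U HU. apply (borel_ext tY _ _ (Hborel U HU)).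
    intro y. split; intros Hnm HM; apply Hnm; apply (meager_sub d _ _ HM);
      intros g [Hg Hu]; split; auto; apply HAB; exact Hg.
Qed.

Lemma borel_category_measurable B :
  borel (prod_topology tY tG) B -> category_measurable B.
Proof.
  induction 1.
  - apply category_measurable_open; assumption.
  - apply category_measurable_compl; assumption.
  - apply category_measurable_cunion; assumption.
  - apply (category_measurable_ext A); assumption.
Qed.

Theorem borel_not_meager_section B :
  borel (prod_topology tY tG) B -> borel tY (fun y => ~ meager d (fun g => B (y, g))).
Proof.
  intro HB. apply (borel_ext tY (fun y => ~ meager d (fun g => B (y, g) /\ True))).
  - apply (borel_category_measurable B HB).
    intros z _. exists 1. split; [lra | auto].
  - intro y. split; intros Hnm HM; apply Hnm; apply (meager_sub d _ _ HM); tauto.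
Qed.

End CategoryQuantifier.

Lemma metric_open_mulr {G : Type} (tG : topology G) (d : G -> G -> R) (mul : G -> G -> G) c U :
  (forall U, tG U <-> metric_open d U) ->
  continuous (prod_topology tG tG) tG (fun p => mul (fst p) (snd p)) ->
  metric_open d U -> metric_open d (fun k => U (mul k c)).
Proof.
  intros HtG Hmul HU k Hk. apply HtG in HU.
  destruct (Hmul _ HU (k, c) Hk) as (A & B & HA & HB & Ha & Hb & Hr).
  destruct (proj1 (HtG A) HA k Ha) as (eps & Heps & Hball).
  exists eps. split; [exact Heps|]. intros w Hw. apply (Hr w c); auto.
Qed.

Lemma meager_mulr {G : Type} (tG : topology G) (d : G -> G -> R)
  (mul : G -> G -> G) (inv : G -> G) (e : G) M c :
  is_group mul inv e -> (forall U, tG U <-> metric_open d U) ->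
  continuous (prod_topology tG tG) tG (fun p => mul (fst p) (snd p)) ->
  meager d M -> meager d (fun k => M (mul k c)).
Proof.
  intros (Hassoc & Hid & Hinv) HtG Hmul.
  apply (meager_homeomorphism d _ (fun k => mul k (inv c))).
  - intro k. rewrite <- Hassoc, (proj1 (Hinv c)). apply Hid.
  - intro k. rewrite <- Hassoc, (proj2 (Hinv c)). apply Hid.
  - intros U HU. apply (metric_open_mulr tG); assumption.
  - intros U HU. apply (metric_open_mulr tG); assumption.
Qed.

Lemma act_pair_continuous {G X : Type} (tG : topology G) (tX : topology X)
  (mul : G -> G -> G) (e : G) (act : G -> X -> X) :
  continuous_action tG tX mul e act ->
  continuous (prod_topology (prod_topology (prod_topology tX tX) tG) tG) (prod_topology tX tX)
    (fun '(x, y, h, g) => (act g x, act h y)).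
Proof.
  intros (_ & _ & Hact) V HV [[[x y] h] g] Hq.
  destruct (HV _ Hq) as (A & B & HA & HB & Ha & Hb & Hr). simpl in Ha, Hb.
  destruct (Hact _ HA (g, x) Ha) as (Ug & Ux & HUg & HUx & Hug & Hux & Hr1).
  destruct (Hact _ HB (h, y) Hb) as (Uh & Uy & HUh & HUy & Huh & Huy & Hr2).
  exists (fun r : (X * X) * G => (Ux (fst (fst r)) /\ Uy (snd (fst r))) /\ Uh (snd r)), Ug.
  split.
  { apply (prod_topology_rect _ _ (fun p : X * X => Ux (fst p) /\ Uy (snd p)) Uh); auto.
    apply prod_topology_rect; assumption. }
  split; [exact HUg|]. split; [simpl; auto|]. split; [exact Hug|].
  intros [[a b] k] l [[Ha' Hb'] Hk] Hl.
  apply Hr; [apply (Hr1 l a) | apply (Hr2 k b)]; assumption.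
Qed.

Section OrbitCategory.

Context {G X : Type} (tG : topology G) (tX : topology X) (mul : G -> G -> G) (inv : G -> G)
  (e : G) (act : G -> X -> X) (F : X -> X -> Prop) (d : G -> G -> R).
Hypotheses (group : is_group mul inv e) (tG_metric : forall U, tG U <-> metric_open d U)
  (mul_continuous : continuous (prod_topology tG tG) tG (fun p => mul (fst p) (snd p)))
  (d_metric : is_metric d) (d_complete : metric_complete d)
  (action : continuous_action tG tX mul e act) (F_equiv : equivalence_rel F)
  (F_orbit : forall x y, F x y -> orbit_eqrel act x y)
  (F_countable : forall x, exists s : nat -> X,
      forall y, orbit_eqrel act x y -> exists n, F y (s n)).

Lemma orbit_eqrel_iff_not_meager x y :
  orbit_eqrel act x y <-> ~ meager d (fun h => ~ meager d (fun g => F (act g x) (act h y))).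
Proof.
  pose proof group as (Hassoc & Hid & Hinv).
  destruct action as (Hact1 & Hact2 & _).
  destruct F_equiv as (_ & Fsym & Ftrans).
  split.
  - intros [g' Hg']. destruct (F_countable x) as [c Hc].
    assert (Hclass : exists n, ~ meager d (fun g => F (act g x) (c n))).
    { apply NNPP. intro Hno. apply (baire_ball d d_metric e 1 d_complete); [lra|].
      apply (meager_sub d (fun g => exists n, F (act g x) (c n))).
      - apply meager_cunion. intro n. apply NNPP. intro H. apply Hno. exists n. exact H.
      - intros g _. apply Hc. exists g. reflexivity. }
    destruct Hclass as [n Hn]. intro HM. apply Hn.
    assert (Hy : meager d (fun h => F (act h y) (c n))).
    { apply (meager_sub d _ _ HM). intros h Hh Hmg. apply Hn, (meager_sub d _ _ Hmg).
      intros g Hg. apply (Ftrans _ (c n)); [exact Hg | apply Fsym, Hh]. }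
    apply (meager_sub d _ _ (meager_mulr tG d mul inv e _ (inv g') group tG_metric
      mul_continuous Hy)).
    intros k Hk. rewrite <- Hg', <- Hact2, <- Hassoc, (proj1 (Hinv g')), (proj2 (Hid k)).
    exact Hk.
  - intro Hnm. destruct (not_meager_inhabited d _ Hnm) as [h Hh].
    destruct (not_meager_inhabited d _ Hh) as [g Hg]. destruct (F_orbit _ _ Hg) as [k Hk].
    exists (mul (inv h) (mul k g)).
    rewrite Hact2, Hact2, Hk, <- Hact2, (proj1 (Hinv h)). apply Hact1.
Qed.

End OrbitCategory.

Theorem mainTheorem9 (G X : Type) (tG : topology G) (tX : topology X)
  (mul : G -> G -> G) (inv : G -> G) (e : G) (act : G -> X -> X)
  (F : X -> X -> Prop) :
  polish_group tG mul inv e ->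
  polish tX ->
  continuous_action tG tX mul e act ->
  equivalence_rel F ->
  borel_rel tX F ->
  (forall x y, F x y -> orbit_eqrel act x y) ->
  (forall x, exists s : nat -> X,
      forall y, orbit_eqrel act x y -> exists n, F y (s n)) ->
  borel_rel tX (orbit_eqrel act).
Proof.
  intros (Hgroup & (d & Hd & Hcomplete & [s Hs] & HtG) & Hmul & _) _ Hact HFeq HFborel
    HForbit HFcount.
  pose (B := fun '(x, y, h, g) => F (act g x) (act h y)).
  assert (HB : borel (prod_topology (prod_topology (prod_topology tX tX) tG) tG) B).
  { apply (borel_ext _ _ _ (borel_preimage _ _ _ _ (act_pair_continuous tG tX mul e act Hact)
      HFborel)).
    intros [[[x y] h] g]. reflexivity. }
  pose proof (borel_not_meager_section _ tG d s (prod_topology_local _ _) HtG Hd Hcomplete Hs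
    B HB) as Hinner.
  pose proof (borel_not_meager_section _ tG d s (prod_topology_local _ _) HtG Hd Hcomplete Hs
    _ Hinner) as Houter.
  apply (borel_ext _ _ _ Houter). intros [x y]. symmetry.
  apply (orbit_eqrel_iff_not_meager tG tX mul inv e act F d); assumption.
Qed.
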